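(* Let $\ell:\mathcal{R}\to\mathbb{R}^{\mathcal{Y}}_+$ be a discrete loss and $L:\mathbb{R}^d\to\mathbb{R}^{\mathcal{Y}}_+$ a minimizable loss. Then $L$ embeds $\ell$ if and only if their Bayes risks coincide: $\underline{L}(p)=\underline{\ell}(p)$ for all $p\in\Delta_{\mathcal{Y}}$.
   Context: $\mathcal{Y}$ is a finite label set, $\Delta_{\mathcal{Y}}$ the simplex, $\mathbb{R}^{\mathcal{Y}}_+$ the nonnegative orthant. For a loss $L:\mathcal{R}\to\mathbb{R}^{\mathcal{Y}}_+$, the Bayes risk is $\underline{L}(p)=\inf_{r\in\mathcal{R}}\langle p,L(r)\rangle$. Discrete: $\mathcal{R}$ finite. Minimizable: the infimum is attained for every $p$; then $\mathrm{prop}[L](p)=\arg\min_r\langle p,L(r)\rangle$. $\mathcal{S}$ is representative for $L$ if $\mathrm{prop}[L](p)\cap\mathcal{S}\neq\emptyset$ for all $p$. $L$ embeds $\ell$ if there exist a representative set $\mathcal{S}$ for $\ell$ and an injective $\varphi:\mathcal{S}\to\mathbb{R}^d$ with (i) $L(\varphi(r))=\ell(r)$ for $r\in\mathcal{S}$ and (ii) $r\in\mathrm{prop}[\ell](p)\iff\varphi(r)\in\mathrm{prop}[L](p)$ for all $p$, $r\in\mathcal{S}$. *)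

From HB Require Import structures.
From mathcomp Require Import all_boot all_order all_algebra.
From mathcomp Require Import boolp classical_sets reals.
Set Implicit Arguments. Unset Strict Implicit. Unset Printing Implicit Defensive.
Import Order.TTheory GRing.Theory Num.Theory.
Local Open Scope ring_scope.
Local Open Scope classical_set_scope.

Section Losses.
Variables (R : realType) (Y : finType).

Definition simplex : set (Y -> R) :=
  [set p | (forall y, 0 <= p y) /\ \sum_(y : Y) p y = 1].

(* A loss is a map from reports to R^Y; nonnegativity is a separate hypothesis. *)
Definition nonneg_loss (Rep : Type) (L : Rep -> Y -> R) : Prop :=
  forall r y, 0 <= L r y.

Definition exp_loss (Rep : Type) (L : Rep -> Y -> R) (p : Y -> R) (r : Rep) : R :=
  \sum_(y : Y) p y * L r y.

Definition bayes_risk (Rep : Type) (L : Rep -> Y -> R) (p : Y -> R) : R :=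
  inf (range (exp_loss L p)).

Definition prop (Rep : Type) (L : Rep -> Y -> R) (p : Y -> R) : set Rep :=
  [set r | forall r', exp_loss L p r <= exp_loss L p r'].

Definition minimizable (Rep : Type) (L : Rep -> Y -> R) : Prop :=
  forall p, simplex p -> exists r, exp_loss L p r = bayes_risk L p.

Definition representative (Rep : Type) (L : Rep -> Y -> R) (S : set Rep) : Prop :=
  forall p, simplex p -> prop L p `&` S !=set0.

Definition embeds (d : nat) (L : 'rV[R]_d -> Y -> R) (Rep : Type)
    (ell : Rep -> Y -> R) : Prop :=
  exists (S : set Rep) (phi : Rep -> 'rV[R]_d),
    [/\ representative ell S,
        (forall r1 r2, S r1 -> S r2 -> phi r1 = phi r2 -> r1 = r2),
        (forall r, S r -> L (phi r) = ell r) &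
        (forall p r, simplex p -> S r -> (prop ell p r <-> prop L p (phi r)))].

End Losses.

From HB Require Import structures.
From mathcomp Require Import all_boot all_order all_algebra.
From mathcomp Require Import boolp classical_sets reals.
From mathcomp Require Import ring lra.
Set Implicit Arguments. Unset Strict Implicit. Unset Printing Implicit Defensive.
Import Order.TTheory GRing.Theory Num.Theory.
Local Open Scope ring_scope.
Local Open Scope classical_set_scope.

(* If L embeds ell, a representative report and its embedding are optimal at p
   for ell and L respectively and have the same loss vector, so the Bayes risks
   agree.  If r is optimal at a
   full-support q and every report with a different loss vector is strictly
   worse, then for an L-optimal u at q the excess <x, L u - ell r> is >= 0 for
   x near q and 0 at q; as q is interior, L u - ell r is constant, hence 0.
   Every p can be moved to such a q while keeping an optimal report of p
   strictly optimal: among the optimal reports take one whose loss vector is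
   farthest from a large constant vector K, and mix p slightly with the
   normalization of K - ell r.  Embedding one report per attained loss vector
   then gives the embedding. *)

Section Positivity.
Variable R : realType.

Lemma small_step_pos (I : finType) (P : pred I) (a b : I -> R) :
  (forall i, P i -> 0 < a i) ->
  exists2 t, 0 < t & forall s, 0 < s <= t -> forall i, P i -> 0 < a i + s * b i.
Proof.
move=> a_gt0; pose t := \big[Num.min/1]_(i | P i) (a i / (`|b i| + 1)).
have t_gt0 : 0 < t.
  by apply: lt_bigmin => // i /a_gt0 ai; rewrite divr_gt0 // ltr_wpDl.
exists t => // s /andP[s_gt0 s_le_t] i Pi.
have : s * (`|b i| + 1) <= a i.
  rewrite -ler_pdivlMr ?ltr_wpDl //.
  exact: le_trans s_le_t (bigmin_le_cond _ _ Pi).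
have : - `|b i| <= b i by rewrite lerNl -normrN ler_norm.
nra.
Qed.

Lemma sum_sqr_sub_gt0 (Y : finType) (f g : Y -> R) :
  f <> g -> 0 < \sum_y (f y - g y) ^+ 2.
Proof.
move=> fg; rewrite lt0r sumr_ge0 ?andbT => [|y _]; last exact: sqr_ge0.
apply/eqP => /psumr_eq0P sum0; apply: fg; apply: funext => y.
by apply/eqP; rewrite -subr_eq0 -sqrf_eq0 sum0 // => z _; exact: sqr_ge0.
Qed.

End Positivity.

Section BayesRisk.
Variables (R : realType) (Y : finType) (Rep : Type) (M : Rep -> Y -> R).

Lemma bayes_risk_prop p r : prop M p r -> bayes_risk M p = exp_loss M p r.
Proof.
move=> r_opt; apply/eqP; rewrite eq_le; apply/andP; split.
  have : has_lbound (range (exp_loss M p)).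
    by exists (exp_loss M p r) => _ [r' _ <-].
  by move/ge_inf; apply; exists r.
by apply: lb_le_inf; [exists (exp_loss M p r), r | move=> _ [r' _ <-]].
Qed.

Hypothesis M_ge0 : nonneg_loss M.

Lemma bayes_risk_le p r :
  (forall y, 0 <= p y) -> bayes_risk M p <= exp_loss M p r.
Proof.
move=> p_ge0; have : has_lbound (range (exp_loss M p)).
  by exists 0 => _ [r' _ <-]; apply: sumr_ge0 => y _; rewrite mulr_ge0.
by move/ge_inf; apply; exists r.
Qed.

Lemma propE p r : (forall y, 0 <= p y) ->
  prop M p r <-> exp_loss M p r = bayes_risk M p.
Proof.
move=> p_ge0; split=> [/bayes_risk_prop -> // | r_risk r'].
by rewrite r_risk bayes_risk_le.
Qed.

End BayesRisk.

Section Perturbation.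
Variables (R : realType) (Y : finType).

Definition perturb (p d : Y -> R) (s : R) : Y -> R := fun y => p y + s * d y.

Definition transfer (i j : Y) : Y -> R := fun y => (y == i)%:R - (y == j)%:R.

Lemma exp_loss_perturb (Rep : Type) (M : Rep -> Y -> R) p d s r :
  exp_loss M (perturb p d s) r = exp_loss M p r + s * exp_loss M d r.
Proof.
rewrite /exp_loss mulr_sumr -big_split; apply: eq_bigr => y _ /=.
by rewrite /perturb; ring.
Qed.

Lemma exp_lossB (Rep : Type) (M : Rep -> Y -> R) p q r :
  exp_loss M (fun y => p y - q y) r = exp_loss M p r - exp_loss M q r.
Proof. by rewrite /exp_loss -sumrB; apply: eq_bigr => y _; rewrite mulrBl. Qed.

Lemma sum_transfer i j (g : Y -> R) : \sum_y transfer i j y * g y = g i - g j.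
Proof.
have sum_dirac k : \sum_y (y == k)%:R * g y = g k.
  rewrite (bigD1 k) //= eqxx mul1r big1 ?addr0 // => y /negbTE ->.
  by rewrite mul0r.
rewrite -(sum_dirac i) -(sum_dirac j) -sumrB.
by apply: eq_bigr => y _; rewrite mulrBl.
Qed.

Lemma simplex_perturb p d s : simplex p -> \sum_y d y = 0 ->
  (forall y, 0 <= perturb p d s y) -> simplex (perturb p d s).
Proof.
move=> [_ p1] d0 ge0; split=> //.
by rewrite /perturb big_split /= -mulr_sumr p1 d0 mulr0 addr0.
Qed.

Lemma simplex_transfer q i j s : simplex q -> i != j -> 0 <= s <= q j ->
  simplex (perturb q (transfer i j) s).
Proof.
move=> q_simplex ij /andP[s_ge0 s_le]; apply: simplex_perturb => //.
  rewrite (eq_bigr (fun y => transfer i j y * 1)) => [|y _]; last first.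
    by rewrite mulr1.
  by rewrite sum_transfer subrr.
have q_ge0 := q_simplex.1.
move=> y; rewrite /perturb /transfer.
have [->|yi] := eqVneq y i; first by rewrite (negbTE ij) subr0 mulr1 addr_ge0.
have [->|_] := eqVneq y j; last by rewrite subrr mulr0 addr0.
by rewrite sub0r mulrN1 subr_ge0.
Qed.

Lemma simplex_mix p m e : simplex p -> simplex m -> 0 <= e <= 1 ->
  simplex (perturb p (fun y => m y - p y) e).
Proof.
move=> p_simplex m_simplex /andP[e_ge0 e_le1]; apply: simplex_perturb => //.
  by rewrite sumrB p_simplex.2 m_simplex.2 subrr.
move=> y; have := p_simplex.1 y; have := m_simplex.1 y; rewrite /perturb; nra.
Qed.

End Perturbation.
Arguments transfer {R Y} i j.

Section ExposingWeight.
Variables (R : realType) (Y : finType).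

Lemma exists_exposing_weight (I : finType) (v : I -> Y -> R) (A : pred I)
    (i0 : I) (y0 : Y) :
  A i0 -> exists i m, [/\ A i, simplex m, (forall y, 0 < m y) &
    forall j, A j -> v j <> v i -> exp_loss v m i < exp_loss v m j].
Proof.
move=> Ai0; pose K := 1 + \big[Num.max/0]_(jy : I * Y) v jy.1 jy.2.
have v_lt_K j y : v j y < K.
  rewrite /K addrC ltr_pwDr //.
  exact: (le_bigmax _ (fun jy : I * Y => v jy.1 jy.2) (j, y)).
pose dist j := \sum_y (v j y - K) ^+ 2.
have [i Ai i_far] := arg_maxP dist Ai0.
pose z y := K - v i y; pose Z := \sum_y z y.
have z_gt0 y : 0 < z y by rewrite subr_gt0.
have Z_gt0 : 0 < Z.
  apply: (lt_le_trans (z_gt0 y0)); rewrite /Z (bigD1 y0) //= lerDl.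
  by apply: sumr_ge0 => y _; exact: ltW.
exists i, (fun y => z y / Z); split => // [|y|j Aj vji].
- split=> [y|]; first by rewrite ltW // divr_gt0.
  by rewrite -mulr_suml divff // gt_eqF.
- by rewrite divr_gt0.
(* As [v i] is farthest from [K], polarization makes [<z, v j - v i>] positive. *)
have polar : 2 * \sum_y z y * (v j y - v i y) =
    \sum_y (v j y - v i y) ^+ 2 + (dist i - dist j).
  rewrite mulr_sumr -sumrB -big_split /=.
  by apply: eq_bigr => y _; rewrite /z; ring.
rewrite -subr_gt0 /exp_loss -sumrB.
have -> : \sum_y (z y / Z * v j y - z y / Z * v i y) =
    Z^-1 * \sum_y z y * (v j y - v i y).
  by rewrite mulr_sumr; apply: eq_bigr => y _; ring.
rewrite pmulr_rgt0 ?invr_gt0 //.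
have far : dist j <= dist i := i_far j Aj.
have := sum_sqr_sub_gt0 vji; lra.
Qed.

End ExposingWeight.

Section StrictMinimizer.
Variables (R : realType) (Y : finType) (Rep : finType) (ell : Rep -> Y -> R).

Definition strict_minimizer (q : Y -> R) (r : Rep) : Prop :=
  forall r', ell r' <> ell r -> exp_loss ell q r < exp_loss ell q r'.

Lemma strict_minimizer_prop q r : strict_minimizer q r -> prop ell q r.
Proof.
move=> r_strict r'; have [ell_eq|/r_strict/ltW //] := pselect (ell r' = ell r).
by rewrite /exp_loss ell_eq.
Qed.

Lemma strict_minimizer_perturb q r d : strict_minimizer q r ->
  exists2 t, 0 < t & forall s, 0 < s <= t -> strict_minimizer (perturb q d s) r.
Proof.
move=> r_strict.
have gap_gt0 r' : `[< ell r' <> ell r >] ->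
    0 < exp_loss ell q r' - exp_loss ell q r.
  by move/asboolP/r_strict; rewrite subr_gt0.
have [t t_gt0 small] :=
  small_step_pos (fun r' => exp_loss ell d r' - exp_loss ell d r) gap_gt0.
exists t => // s s_small r' /asboolP/(small s s_small) gap.
by rewrite -subr_gt0 !exp_loss_perturb; lra.
Qed.

Lemma strict_minimizer_mix p m r :
  simplex p -> simplex m -> (forall y, 0 < m y) -> prop ell p r ->
  (forall r', prop ell p r' -> ell r' <> ell r ->
     exp_loss ell m r < exp_loss ell m r') ->
  exists q, [/\ simplex q, (forall y, 0 < q y) & strict_minimizer q r].
Proof.
move=> p_simplex m_simplex m_gt0 r_opt m_exposes.
pose d y := m y - p y.
have gap_gt0 r' : ~~ `[< prop ell p r' >] ->
    0 < exp_loss ell p r' - exp_loss ell p r.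
  move/asboolPn=> r'_not_opt; rewrite subr_gt0 ltNge; apply/negP => r'_le.
  by apply: r'_not_opt => r''; exact: le_trans r'_le (r_opt r'').
have [t t_gt0 small] :=
  small_step_pos (fun r' => exp_loss ell d r' - exp_loss ell d r) gap_gt0.
pose e := Num.min t 1.
have e_gt0 : 0 < e by rewrite lt_min t_gt0 ltr01.
have e_le1 : e <= 1 by rewrite ge_min lexx orbT.
exists (perturb p d e); split.
- by apply: simplex_mix; rewrite // ltW.
- move=> y; have := p_simplex.1 y; have := m_gt0 y; rewrite /perturb /d; nra.
move=> r' ne; rewrite -subr_gt0 !exp_loss_perturb.
have [/asboolP r'_opt|r'_not_opt] := boolP `[< prop ell p r' >]; last first.
  have e_le_t : 0 < e <= t by rewrite e_gt0 ge_min lexx.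
  have := small e e_le_t r' r'_not_opt; lra.
have same_risk : exp_loss ell p r' = exp_loss ell p r.
  by apply/le_anti; rewrite r'_opt r_opt.
have := m_exposes r' r'_opt ne; rewrite !exp_lossB; nra.
Qed.

Lemma exists_strict_minimizer (r0 : Rep) p : simplex p ->
  exists r q, [/\ prop ell p r, simplex q, (forall y, 0 < q y) &
    strict_minimizer q r].
Proof.
move=> p_simplex.
have [y0 _] : exists y : Y, true.
  case: (pickP (@predT Y)) => [y _|Y_empty]; first by exists y.
  have [_] := p_simplex; rewrite big1 => [/eqP|y _].
    by rewrite eq_sym oner_eq0.
  by have := Y_empty y.
have [r1 _ r1_min] := arg_minP (exp_loss ell p) (erefl : predT r0).
have r1_opt : prop ell p r1 by move=> r; exact: r1_min.
have [r [m [/asboolP r_opt m_simplex m_gt0 m_exposes]]] :=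
  exists_exposing_weight ell (A := fun r => `[< prop ell p r >]) y0
    (asboolT r1_opt).
have [q [q_simplex q_gt0 r_strict]] := strict_minimizer_mix p_simplex m_simplex
  m_gt0 r_opt (fun r' r'_opt => m_exposes r' (asboolT r'_opt)).
by exists r, q.
Qed.

End StrictMinimizer.

Lemma bayes_risk_eq_of_embeds (R : realType) (Y : finType) (Rep : Type) (d : nat)
    (ell : Rep -> Y -> R) (L : 'rV[R]_d -> Y -> R) :
  embeds L ell -> forall p, simplex p -> bayes_risk L p = bayes_risk ell p.
Proof.
move=> [S [phi [S_repr _ phi_loss phi_prop]]] p p_simplex.
have [r [r_opt Sr]] := S_repr p p_simplex.
rewrite (bayes_risk_prop ((phi_prop p r p_simplex Sr).1 r_opt)).
by rewrite (bayes_risk_prop r_opt) /exp_loss phi_loss.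
Qed.

Section EmbeddingOfAttained.
Variables (R : realType) (Y : finType) (Rep : choiceType) (r0 : Rep) (d : nat)
  (ell : Rep -> Y -> R) (L : 'rV[R]_d -> Y -> R).
Hypotheses (ell_ge0 : nonneg_loss ell) (L_ge0 : nonneg_loss L)
  (risk_eq : forall p, simplex p -> bayes_risk L p = bayes_risk ell p).

Lemma embeds_of_attained_prop :
  (forall p, simplex p -> exists r, prop ell p r /\ exists u, L u = ell r) ->
  embeds L ell.
Proof.
move=> attained_opt.
pose attained r := exists u, L u = ell r.
pose canon r := xget r0 [set r' | ell r' = ell r].
pose phi r := xget 0 [set u | L u = ell r].
have canonE r : ell (canon r) = ell r.
  by apply: (@xgetPex _ r0 [set r' | ell r' = ell r]); exists r.
have canon_eq r1 r2 : ell r1 = ell r2 -> canon r1 = canon r2.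
  by rewrite /canon => ->.
have phiE r : attained r -> L (phi r) = ell r.
  exact: (@xgetPex _ 0 [set u | L u = ell r]).
exists [set r | attained r /\ canon r = r], phi; split.
- move=> p p_simplex; have [r [r_opt [u Lu]]] := attained_opt p p_simplex.
  exists (canon r); split; last split.
  + by move=> r'; rewrite /exp_loss canonE; exact: r_opt.
  + by exists u; rewrite canonE.
  + exact/canon_eq/canonE.
- move=> r1 r2 [r1_att r1_canon] [r2_att r2_canon] phi_eq.
  rewrite -r1_canon -r2_canon; apply: canon_eq.
  by rewrite -(phiE _ r1_att) -(phiE _ r2_att) phi_eq.
- by move=> r [r_att _]; exact: phiE.
- move=> p r p_simplex [r_att _].
  rewrite (propE ell_ge0 _ p_simplex.1) (propE L_ge0 _ p_simplex.1).
  by rewrite /exp_loss phiE // -risk_eq.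
Qed.

End EmbeddingOfAttained.

Section EqualBayesRisk.
Variables (R : realType) (Y : finType) (Rep : finType) (d : nat)
  (ell : Rep -> Y -> R) (L : 'rV[R]_d -> Y -> R).
Hypotheses (L_ge0 : nonneg_loss L) (L_min : minimizable L)
  (risk_eq : forall p, simplex p -> bayes_risk L p = bayes_risk ell p).

Lemma attained_of_strict_minimizer q r :
  simplex q -> (forall y, 0 < q y) -> strict_minimizer ell q r ->
  exists u, L u = ell r.
Proof.
move=> q_simplex q_gt0 r_strict; have [u u_opt] := L_min q_simplex; exists u.
have excess_ge0 x :
    simplex x -> prop ell x r -> exp_loss ell x r <= exp_loss L x u.
  move=> x_simplex r_opt; rewrite -(bayes_risk_prop r_opt) -risk_eq //.
  by apply: bayes_risk_le; case: x_simplex.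
have excess_q : exp_loss L q u = exp_loss ell q r.
  by rewrite u_opt risk_eq // (bayes_risk_prop (strict_minimizer_prop r_strict)).
pose c y := L u y - ell r y.
(* The excess [<x, c>] is nonnegative near [q] and vanishes at [q]. *)
have c_le i j : c j <= c i.
  have [-> //|ij] := eqVneq i j.
  have [t t_gt0 r_strict_near] :=
    strict_minimizer_perturb (transfer i j) r_strict.
  pose s := Num.min t (q j).
  have s_gt0 : 0 < s by rewrite lt_min t_gt0 q_gt0.
  have s_le_t : 0 < s <= t by rewrite s_gt0 ge_min lexx.
  have x_simplex : simplex (perturb q (transfer i j) s).
    by apply: simplex_transfer; rewrite // ltW //= ge_min lexx orbT.
  have := excess_ge0 _ x_simplex (strict_minimizer_prop (r_strict_near s s_le_t)).
  rewrite !exp_loss_perturb excess_q lerD2l ler_pM2l //.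
  rewrite /exp_loss !sum_transfer /c; lra.
apply: funext => y; apply/eqP; rewrite -subr_eq0 -/(c y); apply/eqP.
have c_const z : c z = c y by apply/le_anti; rewrite !c_le.
have <- : \sum_z q z * c z = c y.
  by under eq_bigr do rewrite c_const; rewrite -mulr_suml q_simplex.2 mul1r.
transitivity (exp_loss L q u - exp_loss ell q r); last by rewrite excess_q subrr.
by rewrite /exp_loss -sumrB; apply: eq_bigr => z _; rewrite mulrBr.
Qed.

Lemma exists_attained_prop (r0 : Rep) p : simplex p ->
  exists r, prop ell p r /\ exists u, L u = ell r.
Proof.
move=> p_simplex.
have [r [q [r_opt q_simplex q_gt0 r_strict]]] :=
  exists_strict_minimizer ell r0 p_simplex.
by exists r; split; last exact: attained_of_strict_minimizer r_strict.
Qed.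

End EqualBayesRisk.

Theorem proposition2 (R : realType) (Y : finType) (Rep : finType) (r0 : Rep)
    (d : nat) (ell : Rep -> Y -> R) (L : 'rV[R]_d -> Y -> R) :
  nonneg_loss ell -> nonneg_loss L -> minimizable L ->
  (embeds L ell <-> forall p, simplex p -> bayes_risk L p = bayes_risk ell p).
Proof.
move=> ell_ge0 L_ge0 L_min; split; first exact: bayes_risk_eq_of_embeds.
move=> risk_eq; apply: (embeds_of_attained_prop r0 ell_ge0 L_ge0 risk_eq).
exact: exists_attained_prop L_ge0 L_min risk_eq r0.
Qed.
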